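(* Let $A$ be an abelian topological group and $D\le A$ a dense subgroup, and let $r\colon\hat A\to\hat D$ be the restriction map $\chi\mapsto\chi|_D$. Then: (a) $r$ is a bijective continuous homomorphism (every continuous character of $D$ extends uniquely to a continuous character of $A$); (b) if $\alpha_D$ is continuous, then a subset of $\hat A$ is compact if and only if its image under $r$ is compact in $\hat D$, and moreover $\alpha_A$ is continuous; (c) if $D$ is locally quasi-convex, then so is $A$.
   Context: $\mathbb{T}=\mathbb{R}/\mathbb{Z}$, $\Lambda_1$ is the image of $[-\tfrac14,\tfrac14]$ in $\mathbb{T}$. For an abelian topological group $A$, $\hat A$ is the group of continuous homomorphisms $A\to\mathbb{T}$ with the compact-open topology and $\alpha_A\colon A\to\hat{\hat A}$, $\alpha_A(a)(\chi)=\chi(a)$. For $S\subseteq A$, $S^\vartriangleright=\{\chi\in\hat A\mid\chi(S)\subseteq\Lambda_1\}$; for $\Phi\subseteq\hat A$, $\Phi^\vartriangleleft=\{a\in A\mid\chi(a)\in\Lambda_1\ \forall\chi\in\Phi\}$. $A$ is locally quasi-convex if $\{U^{\vartriangleright\vartriangleleft}\mid U \text{ a neighborhood of } 0\}$ is a base of neighborhoods of $0$ in $A$. *)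

From HB Require Import structures.
From mathcomp Require Import all_boot all_order all_algebra generic_quotient.
From mathcomp Require Import all_classical all_reals all_analysis.
From mathcomp Require Import quotient_topology.

Set Implicit Arguments.
Unset Strict Implicit.
Unset Printing Implicit Defensive.

Import Order.TTheory GRing.Theory Num.Theory numFieldNormedType.Exports.
Local Open Scope classical_set_scope.
Local Open Scope ring_scope.
Local Open Scope quotient_scope.

Section Torus.
Variable R : realType.

Definition zdiff : rel R := fun x y => (x - y) \is a Num.int.

Lemma zdiff_refl : reflexive zdiff.
Proof. by move=> x; rewrite /zdiff subrr rpred0. Qed.

Lemma zdiff_sym : symmetric zdiff.
Proof. by move=> x y; rewrite /zdiff -opprB rpredN. Qed.

Lemma zdiff_trans : transitive zdiff.
Proof.
move=> y x z hxy hyz; rewrite /zdiff.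
have -> : x - z = (x - y) + (y - z) by rewrite addrA subrK.
exact: rpredD.
Qed.

Canonical zdiff_equiv := EquivRel zdiff zdiff_refl zdiff_sym zdiff_trans.

Definition torus_quot := {eq_quot zdiff_equiv}.

Definition torus : Type := quotient_topology torus_quot.
HB.instance Definition _ := Topological.copy torus (quotient_topology torus_quot).

Definition tpi (x : R) : torus := \pi_(torus_quot) x.

Definition tadd (p q : torus) : torus := tpi (@repr _ torus_quot p + @repr _ torus_quot q).

Definition Lambda1 : set torus := tpi @` `[- (4%:R)^-1, (4%:R)^-1].

End Torus.
Arguments Lambda1 R : clear implicits.

Section Duals.
Variable R : realType.
Local Notation T := (torus R).

Definition cofun (A : topologicalZmodType) := {compact-open, A -> T}.

Definition is_char (A : topologicalZmodType) (f : A -> T) : Prop :=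
  continuous f /\ forall a b : A, f (a + b) = tadd (f a) (f b).

Definition chars (A : topologicalZmodType) : set (cofun A) :=
  [set f | is_char f].
Arguments chars A : clear implicits.

(** the dual group as a topological space (subspace topology) *)
Definition dual (A : topologicalZmodType) : Type := set_type (chars A).

Definition chadd (A : topologicalZmodType) (f g : cofun A) : cofun A :=
  fun a => tadd (f a) (g a).

(** alpha_A : A -> \hat{\hat A}, alpha_A(a)(chi) = chi(a), viewed in the
    compact-open space of maps \hat A -> T *)
Definition alpha (A : topologicalZmodType) (a : A) :
  {compact-open, dual A -> T} := fun chi => (set_val chi) a.

Definition polar (A : topologicalZmodType) (S : set A) : set (cofun A) :=
  [set chi | chars A chi /\ chi @` S `<=` Lambda1 R].

Definition prepolar (A : topologicalZmodType) (Phi : set (cofun A)) : set A :=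
  [set a | forall chi, Phi chi -> Lambda1 R (chi a)].

(** local quasi-convexity: {U^><| U nbhd of 0} is a base of nbhds of 0 *)
Definition locally_quasi_convex (A : topologicalZmodType) : Prop :=
  (forall U : set A, nbhs (0 : A) U -> nbhs (0 : A) (prepolar (polar U))) /\
  (forall V : set A, nbhs (0 : A) V ->
     exists2 U : set A, nbhs (0 : A) U & prepolar (polar U) `<=` V).

Definition restr (D A : topologicalZmodType) (i : D -> A) (f : cofun A) :
  cofun D := fun d => f (i d).

End Duals.
Arguments chars R A : clear implicits.
Arguments locally_quasi_convex R A : clear implicits.
Arguments cofun R A : clear implicits.
Arguments dual R A : clear implicits.

(** D is (isomorphic, as a topological group, to) a dense subgroup of A,
    via the inclusion i *)
Definition dense_subgroup_embedding (D A : topologicalZmodType) (i : D -> A)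
  : Prop :=
  [/\ injective i,
      (forall x y : D, i (x + y) = i x + i y),
      continuous i,
      (forall U : set D, open U -> exists2 V : set A, open V & i @^-1` V = U)
    & dense (range i)].

From HB Require Import structures.
From mathcomp Require Import all_boot all_order all_algebra generic_quotient.
From mathcomp Require Import all_classical all_reals all_analysis.
From mathcomp Require Import quotient_topology.
From mathcomp Require Import ring lra.

(* T is metrized by the distance to the nearest integer, for which characters
   are uniformly continuous.
   (a) A character g of D is therefore Cauchy along i(D); since T is compact,
   g(d) converges as i(d) tends to a, and the limit is a continuous character
   of A extending g, unique by density.
   (b) Continuity of alpha_D makes compact sets of characters of D
   equicontinuous, and equicontinuity lifts from D to A by density.  On an
   equicontinuous family, pointwise convergence on the dense set i(D) already
   gives joint convergence in (point, character), hence compact-open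
   convergence; this yields both the compactness criterion and the continuity
   of alpha_A.
   (c) If t and 2t lie in Lambda_1 then |t| <= 1/8.  Take U with U + U inside
   an open W such that i(d) in W forces d in U_D, where U_D^{▷◁} is small in D.
   For a in U^{▷◁} and d with i(d) - a in U, the extension to A of any psi in
   U_D^▷ is bounded by 1/8 at a and at i(d) - a, so d lies in U_D^{▷◁} and a
   is close to i(d). *)

Set Implicit Arguments.
Unset Strict Implicit.
Unset Printing Implicit Defensive.
Import Order.TTheory GRing.Theory Num.Theory numFieldNormedType.Exports.
Local Open Scope classical_set_scope.
Local Open Scope ring_scope.
Local Open Scope quotient_scope.

Section Torus.
Variable R : realType.
Local Notation T := (torus R).

Definition distZ (x : R) : R :=
  Num.min (x - (Num.floor x)%:~R) ((Num.floor x)%:~R + 1 - x).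

Lemma distZ_le_dist (x k : R) : k \is a Num.int -> distZ x <= `|x - k|.
Proof.
move=> /intrP [m ->]; rewrite /distZ ge_min.
have [hm|hm] := leP m (Num.floor x).
  have hmx : m%:~R <= (Num.floor x)%:~R :> R by rewrite ler_int.
  have := floor_le x => hfx.
  rewrite ger0_norm; last by lra.
  by apply/orP; left; lra.
have hmx : (Num.floor x + 1)%:~R <= m%:~R :> R by rewrite ler_int lezD1.
have := floorD1_gt x => hfx.
rewrite intrD in hmx hfx.
rewrite ltr0_norm; last by lra.
by apply/orP; right; lra.
Qed.

Lemma distZ_attained (x : R) : exists2 k : R, k \is a Num.int & distZ x = `|x - k|.
Proof.
have := floor_le x; have := floorD1_gt x; rewrite intrD => hx1 hx0.
rewrite /distZ minEle; case: ifP => _.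
  by exists (Num.floor x)%:~R; rewrite ?intr_int // ger0_norm // subr_ge0.
exists (Num.floor x + 1)%:~R; first exact: intr_int.
by rewrite intrD ltr0_norm ?opprB //; lra.
Qed.

Lemma distZ_ge0 (x : R) : 0 <= distZ x.
Proof. by have [k _ ->] := distZ_attained x. Qed.

Lemma distZ_le_norm (x : R) : distZ x <= `|x|.
Proof. by have := distZ_le_dist x (int_num0 R); rewrite subr0. Qed.

Lemma distZ_eq0 (x : R) : distZ x = 0 <-> x \is a Num.int.
Proof.
split; last first.
  move=> xZ; apply/eqP; rewrite eq_le distZ_ge0 andbT.
  by have := distZ_le_dist x xZ; rewrite subrr normr0.
have [k kZ ->] := distZ_attained x.
by move=> /eqP; rewrite normr_eq0 subr_eq0 => /eqP ->.
Qed.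

Lemma distZDz (x k : R) : k \is a Num.int -> distZ (x + k) = distZ x.
Proof.
move=> kZ; apply/eqP; rewrite eq_le; apply/andP; split.
  have [l lZ ->] := distZ_attained x.
  have -> : x - l = x + k - (k + l) by ring.
  by apply: distZ_le_dist; rewrite rpredD.
have [l lZ ->] := distZ_attained (x + k).
have -> : x + k - l = x - (l - k) by ring.
by apply: distZ_le_dist; rewrite rpredB.
Qed.

Lemma distZN (x : R) : distZ (- x) = distZ x.
Proof.
suff le x' : distZ (- x') <= distZ x' by apply/eqP; rewrite eq_le le /= -{1}(opprK x) le.
have [l lZ ->] := distZ_attained x'.
have -> : x' - l = - (- x' - (- l)) by ring.
by rewrite normrN; apply: distZ_le_dist; rewrite rpredN.
Qed.

Lemma ler_distZD (x y : R) : distZ (x + y) <= distZ x + distZ y.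
Proof.
have [k kZ ->] := distZ_attained x; have [l lZ ->] := distZ_attained y.
apply: le_trans (ler_normD _ _); rewrite addrACA -opprD.
by apply: distZ_le_dist; rewrite rpredD.
Qed.

Lemma distZ_small (x : R) : `|x| <= 2^-1 -> distZ x = `|x|.
Proof.
move=> hx; apply/eqP; rewrite eq_le distZ_le_norm /=.
have [_ /intrP [m ->] ->] := distZ_attained x.
have [->|m0] := eqVneq m 0; first by rewrite subr0.
have m1 : 1 <= `|m%:~R : R| by rewrite -intr_norm ler1z -gtz0_ge1 normr_gt0.
have := lerB_dist m%:~R x; rewrite distrC; lra.
Qed.

Lemma tpi_eq (x y : R) : tpi x = tpi y <-> (x - y) \is a Num.int.
Proof. exact: (rwP (@eqquotP _ _ (torus_quot R) x y)). Qed.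

Definition rep (p : T) : R := @repr _ (torus_quot R) p.

Lemma tpi_rep (p : T) : tpi (rep p) = p.
Proof. exact: reprK. Qed.

Lemma rep_tpi (x : R) : (rep (tpi x) - x) \is a Num.int.
Proof. by apply/tpi_eq; rewrite tpi_rep. Qed.


Definition tnorm (p : T) : R := distZ (rep p).
Definition tdist (p q : T) : R := distZ (rep p - rep q).

Lemma tdist_tpi (x y : R) : tdist (tpi x) (tpi y) = distZ (x - y).
Proof.
rewrite /tdist; have -> : rep (tpi x) - rep (tpi y)
  = (x - y) + ((rep (tpi x) - x) - (rep (tpi y) - y)) by ring.
by rewrite distZDz // rpredB // rep_tpi.
Qed.

Lemma tnorm_tpi (x : R) : tnorm (tpi x) = distZ x.
Proof. by rewrite /tnorm -[rep _](subrK x) addrC distZDz // rep_tpi. Qed.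

Lemma taddE (p q : T) : tadd p q = tpi (rep p + rep q).
Proof. by []. Qed.


Lemma tdistC (p q : T) : tdist p q = tdist q p.
Proof. by rewrite /tdist -distZN opprB. Qed.

Lemma tdistxx (p : T) : tdist p p = 0.
Proof. by apply/distZ_eq0; rewrite subrr int_num0. Qed.

Lemma tdist_triangle (p q r : T) : tdist p r <= tdist p q + tdist q r.
Proof.
rewrite /tdist; have -> : rep p - rep r = (rep p - rep q) + (rep q - rep r) by ring.
exact: ler_distZD.
Qed.

Lemma eq_of_tdist_lt (p q : T) : (forall e, 0 < e -> tdist p q < e) -> p = q.
Proof.
move=> small; rewrite -(tpi_rep p) -(tpi_rep q); apply/tpi_eq/distZ_eq0.
apply/eqP; rewrite eq_le distZ_ge0 andbT; apply/ler_addgt0Pr => e e0.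
by rewrite add0r ltW // small.
Qed.

Lemma tdist_tadd (p q p' q' : T) :
  tdist (tadd p q) (tadd p' q') <= tdist p p' + tdist q q'.
Proof.
rewrite !taddE tdist_tpi /tdist.
have -> : rep p + rep q - (rep p' + rep q') = (rep p - rep p') + (rep q - rep q') by ring.
exact: ler_distZD.
Qed.

Lemma tnorm_tadd (p q : T) : tnorm (tadd p q) <= tnorm p + tnorm q.
Proof. by rewrite taddE tnorm_tpi; apply: ler_distZD. Qed.

Lemma tnorm_le_tdist (p q : T) : tnorm p <= tnorm q + tdist p q.
Proof. by rewrite /tnorm /tdist -{1}(subrKC (rep q) (rep p)); apply: ler_distZD. Qed.

Lemma tdist_taddl (p q : T) : tdist (tadd p q) q = tnorm p.
Proof. by rewrite taddE -{2}(tpi_rep q) tdist_tpi addrK. Qed.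

Lemma tdist_tpi0 (p : T) : tdist (tpi 0) p = tnorm p.
Proof. by rewrite -(tpi_rep p) tdist_tpi tnorm_tpi sub0r distZN. Qed.

Lemma Lambda1P (p : T) : Lambda1 R p <-> tnorm p <= 4^-1.
Proof.
split.
  case=> x /=; rewrite in_itv /= => /andP [x_ge x_le] <-; rewrite tnorm_tpi.
  by apply: le_trans (distZ_le_norm x) _; rewrite ler_norml x_ge x_le.
have [k kZ dk] := distZ_attained (rep p); rewrite /tnorm dk => pk.
exists (rep p - k); first by rewrite /= in_itv /= -ler_norml.
by rewrite -[RHS]tpi_rep; apply/tpi_eq; rewrite addrAC subrr add0r rpredN.
Qed.

Lemma tnorm_le8 (p : T) : tnorm p <= 4^-1 -> tnorm (tadd p p) <= 4^-1 ->
  tnorm p <= 8^-1.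
Proof.
have [k kZ dk] := distZ_attained (rep p).
have -> : tadd p p = tpi (2 * (rep p - k) + 2 * k) by rewrite taddE; congr tpi; ring.
rewrite tnorm_tpi distZDz ?rpredM ?rpred_nat // /tnorm dk => p_le.
by rewrite distZ_small normrM ger0_norm //; lra.
Qed.

Definition tball (p : T) (e : R) : set T := [set q | tdist p q < e].

Lemma tpi_continuous : continuous (@tpi R).
Proof. exact: (@pi_continuous _ (torus_quot R)). Qed.

Lemma open_tball (p : T) (e : R) : open (tball p e).
Proof.
rewrite /open /= /quotient_open openE => x /= px.
have {}px : tdist p (tpi x) < e := px.
rewrite /interior nbhs_ballP; exists (e - tdist p (tpi x)) => /=.
  by rewrite subr_gt0.
move=> y; rewrite -ball_normE /= => xy; rewrite /tball /=.
rewrite -(tpi_rep p) !tdist_tpi in px xy *.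
have := distZ_le_norm (x - y).
have := ler_distZD (rep p - x) (x - y); rewrite addrA subrK; lra.
Qed.

Lemma tball_nbhs (p : T) (e : R) : 0 < e -> nbhs p (tball p e).
Proof.
move=> e0; apply: open_nbhs_nbhs; split; first exact: open_tball.
by rewrite /tball /= tdistxx.
Qed.

Lemma nbhs_tball (p : T) (N : set T) : nbhs p N -> exists2 e, 0 < e & tball p e `<=` N.
Proof.
rewrite nbhsE => -[B [oB Bp] BN].
have : nbhs (rep p) (@tpi R @^-1` B).
  by apply: tpi_continuous; rewrite tpi_rep; apply: open_nbhs_nbhs.
rewrite nbhs_ballP => -[r /= r0 hr]; exists r => // q pq; apply: BN.
have [k kZ dk] := distZ_attained (rep p - rep q).
have <- : tpi (rep q + k) = q.
  by rewrite -[RHS]tpi_rep; apply/tpi_eq; rewrite addrAC subrr add0r.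
by apply: hr; rewrite -ball_normE /= opprD addrA -dk.
Qed.

Lemma torus_compact : compact [set: T].
Proof.
have -> : [set: T] = @tpi R @` `[0, 1].
  apply/seteqP; split => // p _; have := floor_le (rep p).
  have := floorD1_gt (rep p); rewrite intrD => p_lt p_ge.
  exists (rep p - (Num.floor (rep p))%:~R).
    by rewrite /= in_itv /=; apply/andP; split; lra.
  by rewrite -[RHS]tpi_rep; apply/tpi_eq; rewrite addrAC subrr add0r rpredN intr_int.
apply: continuous_compact; last exact: segment_compact.
by apply: continuous_subspaceT; exact: tpi_continuous.
Qed.

End Torus.

Section TopologicalZmodFacts.
Variable M : topologicalZmodType.

Lemma nbhs0_shift (a : M) (W : set M) :
  nbhs (0 : M) W -> nbhs a [set x | W (x - a)].
Proof.
move=> W0; have := @add_continuous M (a, - a); rewrite /continuous_at /= subrr.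
move=> /(_ _ W0) [[P Q] /= [Pa Qa] PQ].
by apply: filterS Pa => x Px; apply: (PQ (x, - a)); split => //; exact: nbhs_singleton.
Qed.

Lemma nbhs0_add (V : set M) : nbhs (0 : M) V ->
  exists2 N, nbhs (0 : M) N & forall x y, N x -> N y -> V (x + y).
Proof.
move=> V0; have := @add_continuous M (0, 0); rewrite /continuous_at /= addr0.
move=> /(_ _ V0) [[P Q] /= [P0 Q0] PQ]; exists (P `&` Q); first exact: filterI.
by move=> x y [Px _] [_ Qy]; apply: (PQ (x, y)).
Qed.

Lemma nbhs0_sub (V : set M) : nbhs (0 : M) V ->
  exists2 N, nbhs (0 : M) N & forall x y, N x -> N y -> V (x - y).
Proof.
move=> V0; have := @sub_continuous M (0, 0); rewrite /continuous_at /= subr0.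
move=> /(_ _ V0) [[P Q] /= [P0 Q0] PQ]; exists (P `&` Q); first exact: filterI.
by move=> x y [Px _] [_ Qy]; apply: (PQ (x, y)).
Qed.

Lemma nbhs0_opp (V : set M) : nbhs (0 : M) V -> nbhs (0 : M) [set x | V (- x)].
Proof.
by move=> V0; have := @opp_continuous M 0; rewrite /continuous_at /= oppr0 => /(_ _ V0).
Qed.

Lemma double_continuous : continuous (fun x : M => x + x).
Proof.
move=> x; apply: (@continuous_comp _ _ _ (fun x => (x, x)) (fun x : M * M => x.1 + x.2)).
  by apply: cvg_pair; exact: cvg_id.
exact: add_continuous.
Qed.

Lemma sub_prepolar_polar (R : realType) (S : set M) :
  S `<=` prepolar (@polar R M S).
Proof. by move=> x Sx chi [_ chiS]; apply: chiS; exists x. Qed.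

End TopologicalZmodFacts.

Lemma ultra_cluster_cvg (X : Type) (Y : topologicalType) (F : set_system X)
    (h : X -> Y) (y : Y) :
  UltraFilter F -> cluster (h @ F) y -> h @ F --> y.
Proof.
move=> UF cl N Ny; case: (in_ultra_setVsetC (h @^-1` N) UF) => // FNc.
by case: (cl (~` N) N FNc Ny) => z [].
Qed.

Lemma compact_open_cvg_joint (X Y : topologicalType)
    (F : set_system {compact-open, X -> Y}) (f : {compact-open, X -> Y}) :
  Filter F ->
  (forall K, compact K -> forall x, K x -> forall O, nbhs (f x) O ->
     \forall x' \near x & g \near F, K x' -> O (g x')) ->
  F --> f.
Proof.
move=> FF joint; apply/compact_open_cvgP => K O cK oO fKO.
have := cK; rewrite compact_near_coveringP -near_covering_withinP => cov.
have : \forall g \near F, K `<=` (fun x => O (g x)).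
  apply: cov => x Kx; apply: joint => //.
  by apply: open_nbhs_nbhs; split => //; apply: fKO; exists x.
by apply: filterS => g gKO _ [x Kx <-]; exact: gKO.
Qed.

Section Characters.
Variable R : realType.
Local Notation T := (torus R).

Lemma char_tdist (M : topologicalZmodType) (f : M -> T) :
  (forall a b, f (a + b) = tadd (f a) (f b)) ->
  forall x y, tdist (f x) (f y) = tnorm (f (x - y)).
Proof. by move=> fD x y; rewrite -{1}(subrK y x) (fD (x - y) y) tdist_taddl. Qed.

Lemma char0 (M : topologicalZmodType) (f : cofun R M) : chars R M f -> f 0 = tpi 0.
Proof.
case=> _ fD; apply: eq_of_tdist_lt => e e0; rewrite tdistC tdist_tpi0.
by have := char_tdist fD 0 0; rewrite tdistxx subr0 => <-.
Qed.

Lemma char_double (M : topologicalZmodType) (f : cofun R M) :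
  chars R M f -> chars R M (fun x => f (x + x)).
Proof.
case=> fc fD; split; last by move=> x y; rewrite -fD addrACA.
by move=> x; apply: continuous_comp; [exact: double_continuous | exact: fc].
Qed.

Lemma char_tnorm_le8 (M : topologicalZmodType) (f : cofun R M) (x : M) :
  chars R M f -> Lambda1 R (f x) -> Lambda1 R (f (x + x)) -> tnorm (f x) <= 8^-1.
Proof. by case=> _ fD /Lambda1P fx; rewrite fD => /Lambda1P; exact: tnorm_le8. Qed.

Lemma nbhs_eval_tball (X : topologicalType) (f : {compact-open, X -> T}) (x : X)
    (e : R) :
  0 < e -> nbhs f [set g : {compact-open, X -> T} | tdist (f x) (g x) < e].
Proof.
move=> e0; apply: (@filterS _ _ _ [set g | g @` [set x] `<=` tball (f x) e]).
  by move=> g /(_ (g x)) gx; apply: gx; exists x.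
apply: open_nbhs_nbhs; split.
  by apply: compact_open_open; [exact: compact_set1 | exact: open_tball].
by move=> _ [_ -> <-]; rewrite /tball /= tdistxx.
Qed.

Definition equicontinuous0 (M : topologicalZmodType) (E : set (cofun R M)) :=
  forall e : R, 0 < e -> exists2 W, nbhs (0 : M) W &
    forall f, E f -> forall w, W w -> tnorm (f w) < e.

(* For families of characters equicontinuity at 0 is uniform equicontinuity. *)
Lemma equicontinuous0_near (M : topologicalZmodType) (E : set (cofun R M)) :
  E `<=` chars R M -> equicontinuous0 E ->
  forall (a : M) (e : R), 0 < e -> exists2 N, nbhs a N &
    forall f, E f -> forall x y, N x -> N y -> tdist (f x) (f y) < e.
Proof.
move=> EC eqE a e e0; have [W W0 EW] := eqE e e0.
have [N N0 NW] := nbhs0_sub W0.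
exists [set x | N (x - a)]; first exact: nbhs0_shift.
move=> f Ef x y Nx Ny; rewrite (char_tdist (EC f Ef).2); apply: EW => //.
have -> : x - y = (x - a) - (y - a) by rewrite opprB addrA subrK.
exact: NW.
Qed.

Lemma compact_dual_preimage (M : topologicalZmodType) (K : set (cofun R M)) :
  K `<=` chars R M -> compact K ->
  compact (@set_val _ (chars R M) @^-1` K : set (dual R M)).
Proof.
move=> KC cK; rewrite compact_ultra => F UF FK.
have [g [Kg clg]] := cK _ (fmap_proper_filter set_val (ultra_proper : ProperFilter F)) FK.
exists (exist _ g (mem_set (KC g Kg)) : dual R M); split => //.
move=> U /= [_ [[B oB <-] Bg BU]]; apply: filterS BU _.
by apply: (ultra_cluster_cvg UF clg); apply: open_nbhs_nbhs.
Qed.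

(* Continuity of [alpha] at 0, for the compact-open topology over the compact
   set [K'] of characters, is equicontinuity of [K] at 0. *)
Lemma compact_equicontinuous0 (M : topologicalZmodType) (K : set (cofun R M)) :
  continuous (@alpha R M) -> K `<=` chars R M -> compact K -> equicontinuous0 K.
Proof.
move=> alpha_cont KC cK e e0.
pose K' := @set_val _ (chars R M) @^-1` K : set (dual R M).
pose O := [set phi : {compact-open, dual R M -> T} | phi @` K' `<=` tball (tpi 0) e].
have alpha0O : nbhs (alpha (0 : M)) O.
  apply: open_nbhs_nbhs; split.
    by apply: compact_open_open; [exact: compact_dual_preimage | exact: open_tball].
  move=> _ [chi _ <-]; rewrite /alpha /tball /=.
  by have -> : set_val chi 0 = tpi 0 := char0 (set_valP chi); rewrite tdistxx.
exists (@alpha R M @^-1` O); first exact: alpha_cont.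
move=> f Kf w Ow; rewrite -tdist_tpi0.
exact: (Ow _ (ex_intro2 _ _ (exist _ f (mem_set (KC f Kf)) : dual R M) Kf erefl)).
Qed.

Lemma compact_open_cvg_tdist (X : topologicalType)
    (F : set_system {compact-open, X -> T}) (f : {compact-open, X -> T}) :
  Filter F ->
  (forall K, compact K -> forall x, K x -> forall e, 0 < e ->
     \forall x' \near x & g \near F, K x' -> tdist (f x) (g x') < e) ->
  F --> f.
Proof.
move=> FF joint; apply: compact_open_cvg_joint => K cK x Kx O /nbhs_tball [e e0 eO].
by apply: filterS (joint K cK x Kx e e0) => -[x' g] /= close Kx'; apply/eO/close.
Qed.

End Characters.

Section DenseSubgroup.
Variables (R : realType) (A D : topologicalZmodType) (i : D -> A).
Hypothesis i_emb : dense_subgroup_embedding i.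
Local Notation T := (torus R).

Let iD : forall x y : D, i (x + y) = i x + i y.
Proof. by case: i_emb. Qed.

Let i_cont : continuous i.
Proof. by case: i_emb. Qed.

Lemma embedding0 : i 0 = 0.
Proof. by apply: (@addrI _ (i 0)); rewrite -iD !addr0. Qed.

Lemma embeddingB (x y : D) : i (x - y) = i x - i y.
Proof.
rewrite iD; congr (_ + _); apply: (@addrI _ (i y)).
by rewrite -iD !subrr embedding0.
Qed.

Lemma dense_embedding_nbhs (a : A) (N : set A) : nbhs a N -> exists d, N (i d).
Proof.
case: i_emb => _ _ _ _ iT; rewrite nbhsE => -[B [oB Ba] BN].
have [x [Bx [d _ dx]]] := iT B (ex_intro _ a Ba) oB.
by exists d; apply: BN; rewrite dx.
Qed.

Lemma embedding_nbhs0 (W : set D) : nbhs (0 : D) W ->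
  exists V : set A, [/\ open V, V 0 & forall d, V (i d) -> W d].
Proof.
case: i_emb => _ _ _ iopen _; rewrite nbhsE => -[B [oB B0] BW].
have [V oV VB] := iopen B oB; exists V; split => //.
  by rewrite -embedding0; have : (i @^-1` V) 0 by rewrite VB.
by move=> d Vd; apply: BW; rewrite -VB.
Qed.

Lemma dense_open_tnorm_le (f : A -> T) (O : set A) (c : R) :
  continuous f -> open O -> (forall d, O (i d) -> tnorm (f (i d)) <= c) ->
  forall x, O x -> tnorm (f x) <= c.
Proof.
move=> fc oO bound x Ox; apply/ler_addgt0Pr => e e0.
have fx : nbhs x (f @^-1` tball (f x) e) by apply: fc; exact: tball_nbhs.
have [d [fxd Od]] := dense_embedding_nbhs (filterI fx (open_nbhs_nbhs (conj oO Ox))).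
have := tnorm_le_tdist (f x) (f (i d)); have := bound d Od.
have : tdist (f x) (f (i d)) < e := fxd.
lra.
Qed.

Definition trace_nbhs (a : A) : set_system D :=
  [set P | exists2 N, nbhs a N & forall d, N (i d) -> P d].

Instance trace_nbhs_proper (a : A) : ProperFilter (trace_nbhs a).
Proof.
apply: Build_ProperFilter_ex.
  by move=> P [N Na NP]; have [d Nd] := dense_embedding_nbhs Na; exists d; apply: NP.
split.
- by exists setT => //; exact: filterT.
- move=> P Q [N1 N1a N1P] [N2 N2a N2Q]; exists (N1 `&` N2); first exact: filterI.
  by move=> d [/N1P ? /N2Q ?].
- by move=> P Q PQ [N Na NP]; exists N => // d /NP /PQ.
Qed.

Lemma char_trace_cauchy (g : D -> T) : is_char g ->
  forall (a : A) (e : R), 0 < e -> exists2 N, nbhs a N &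
    forall d1 d2, N (i d1) -> N (i d2) -> tdist (g d1) (g d2) < e.
Proof.
move=> [gc gD] a e e0.
have g0 : nbhs (0 : D) (g @^-1` tball (g 0) e) by apply: gc; exact: tball_nbhs.
have [V [oV V0 Vg]] := embedding_nbhs0 g0.
have [N N0 NV] := nbhs0_sub (open_nbhs_nbhs (conj oV V0)).
exists [set x | N (x - a)]; first exact: nbhs0_shift.
move=> d1 d2 /= N1 N2; rewrite (char_tdist gD) -tdist_tpi0 -(char0 (conj gc gD)).
apply: Vg; rewrite embeddingB.
have -> : i d1 - i d2 = (i d1 - a) - (i d2 - a) by rewrite opprB addrA subrK.
exact: NV.
Qed.

Lemma char_trace_lim (g : D -> T) : is_char g -> forall a : A, exists c : T,
  forall e : R, 0 < e -> trace_nbhs a [set d | tdist (g d) c < e].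
Proof.
move=> g_char a.
have [c [_ clc]] := torus_compact (fmap_proper_filter g (trace_nbhs_proper a)) filterT.
exists c => e e0; have e2 : 0 < e / 2 by rewrite divr_gt0.
have [N Na Ng] := char_trace_cauchy g_char a e2.
have gN : (g @ trace_nbhs a) [set t | exists2 d, N (i d) & t = g d].
  by exists N => // d Nd; exists d.
have [_ [[d' Nd' ->] cd']] := clc _ _ gN (tball_nbhs c e2).
exists N => // d Nd /=; have := Ng d d' Nd Nd'.
have : tdist c (g d') < e / 2 := cd'; rewrite tdistC.
have := tdist_triangle (g d) (g d') c; lra.
Qed.

Section Extension.
Variables (g : D -> T) (f : A -> T).
Hypothesis g_char : is_char g.
Hypothesis f_lim : forall (a : A) (e : R), 0 < e ->
  trace_nbhs a [set d | tdist (g d) (f a) < e].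

Lemma extension_restr (d : D) : f (i d) = g d.
Proof.
apply: eq_of_tdist_lt => e e0; rewrite tdistC.
by have [N Nid NP] := f_lim (i d) e0; apply: NP; exact: nbhs_singleton.
Qed.

Lemma extension_continuous : continuous f.
Proof.
move=> a N /nbhs_tball [e e0 eN].
have e2 : 0 < e / 2 by rewrite divr_gt0.
have [N1 /[dup] N1a] := f_lim a e2; rewrite {1}nbhsE => -[B [oB Ba] BN1] N1g.
apply: filterS (open_nbhs_nbhs (conj oB Ba)) => x Bx; apply: eN.
have [N2 N2x N2g] := f_lim x e2.
have [d [Bd N2d]] := dense_embedding_nbhs (filterI (open_nbhs_nbhs (conj oB Bx)) N2x).
have ad : tdist (g d) (f a) < e / 2 := N1g d (BN1 _ Bd).
have dx : tdist (g d) (f x) < e / 2 := N2g d N2d.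
rewrite tdistC in ad; have := tdist_triangle (f a) (g d) (f x).
rewrite /tball /=; lra.
Qed.

Lemma extension_additive (a b : A) : f (a + b) = tadd (f a) (f b).
Proof.
apply: eq_of_tdist_lt => e e0; have e3 : 0 < e / 3 by rewrite divr_gt0.
have [N N_ab Ng] := f_lim (a + b) e3.
have [N1 N1a N1g] := f_lim a e3; have [N2 N2b N2g] := f_lim b e3.
have [[P Q] /= [Pa Qb] PQ] := @add_continuous A (a, b) _ N_ab.
have [d1 [Pd1 N1d1]] := dense_embedding_nbhs (filterI Pa N1a).
have [d2 [Qd2 N2d2]] := dense_embedding_nbhs (filterI Qb N2b).
have Nd : N (i (d1 + d2)) by rewrite iD; exact: (PQ (i d1, i d2)).
have close : tdist (g (d1 + d2)) (f (a + b)) < e / 3 := Ng _ Nd.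
have close1 : tdist (g d1) (f a) < e / 3 := N1g _ N1d1.
have close2 : tdist (g d2) (f b) < e / 3 := N2g _ N2d2.
rewrite g_char.2 tdistC in close.
have := tdist_tadd (g d1) (g d2) (f a) (f b).
have := tdist_triangle (f (a + b)) (tadd (g d1) (g d2)) (tadd (f a) (f b)); lra.
Qed.

End Extension.

Lemma char_extension (g : D -> T) : is_char g ->
  exists2 f : A -> T, is_char f & forall d, f (i d) = g d.
Proof.
move=> g_char; have [f f_lim] := choice (char_trace_lim g_char).
exists f; last exact: extension_restr.
split; [exact: extension_continuous f_lim | exact: extension_additive f_lim].
Qed.

Lemma restr_char (f : cofun R A) : chars R A f -> chars R D (restr i f).
Proof.
case=> fc fD; split; last by move=> x y; rewrite /restr iD fD.
by move=> x; apply: continuous_comp; [exact: i_cont | exact: fc].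
Qed.

Lemma restr_inj (f g : cofun R A) : chars R A f -> chars R A g ->
  restr i f = restr i g -> f = g.
Proof.
move=> [fc _] [gc _] fg; apply/funext => a; apply: eq_of_tdist_lt => e e0.
have e2 : 0 < e / 2 by rewrite divr_gt0.
have fa : nbhs a (f @^-1` tball (f a) (e / 2)) by apply: fc; exact: tball_nbhs.
have ga : nbhs a (g @^-1` tball (g a) (e / 2)) by apply: gc; exact: tball_nbhs.
have [d [fd gd]] := dense_embedding_nbhs (filterI fa ga).
have fgd : f (i d) = g (i d) by have := congr1 (fun h => h d) fg.
have : tdist (f a) (f (i d)) < e / 2 := fd; rewrite fgd.
have : tdist (g a) (g (i d)) < e / 2 := gd; rewrite tdistC.
have := tdist_triangle (f a) (g (i d)) (g a); lra.
Qed.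

Lemma restr_surj (g : cofun R D) : chars R D g ->
  exists2 f : cofun R A, chars R A f & restr i f = g.
Proof.
by move=> /char_extension [f f_char fg]; exists f => //; apply/funext => d; exact: fg.
Qed.

Lemma restr_continuous : continuous (@restr R D A i).
Proof.
move=> f; have FF : Filter (restr i @ nbhs f) by exact: fmap_filter.
apply/(@compact_open_cvgP D T _ _ FF) => K O cK oO fKO.
have ciK : compact (i @` K) by apply: continuous_compact => //; exact: continuous_subspaceT.
have : nbhs f [set h : cofun R A | h @` (i @` K) `<=` O].
  apply: open_nbhs_nbhs; split; first exact: compact_open_open.
  by move=> _ [_ [k Kk <-] <-]; apply: fKO; exists k.
by apply: filterS => h hiKO _ [k Kk <-]; apply: hiKO; exists (i k) => //; exists k.
Qed.

Lemma equicontinuous0_restr (E : set (cofun R A)) : E `<=` chars R A ->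
  equicontinuous0 (restr i @` E) -> equicontinuous0 E.
Proof.
move=> EC eqE e e0; have e2 : 0 < e / 2 by rewrite divr_gt0.
have [W W0 EW] := eqE _ e2.
have [V [oV V0 VW]] := embedding_nbhs0 W0.
exists V; first exact: open_nbhs_nbhs.
move=> f Ef w Vw; suff : tnorm (f w) <= e / 2 by lra.
apply: (dense_open_tnorm_le (EC f Ef).1 oV) => // d /VW Wd; apply/ltW.
exact: (EW (restr i f) (ex_intro2 _ _ f Ef erefl) d Wd).
Qed.

Section DualOfDense.
Hypothesis alphaD_cont : continuous (@alpha R D).

Lemma compact_restr_equicontinuous0 (E : set (cofun R A)) : E `<=` chars R A ->
  compact (restr i @` E) -> equicontinuous0 E.
Proof.
move=> EC cE; apply: equicontinuous0_restr => //.
apply: compact_equicontinuous0 => // _ [f Ef <-]; exact: restr_char (EC f Ef).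
Qed.

Lemma compact_of_restr (S : set (cofun R A)) : S `<=` chars R A ->
  compact (restr i @` S) -> compact S.
Proof.
move=> SC cS; have eqS := compact_restr_equicontinuous0 SC cS.
rewrite compact_ultra => F UF FS.
have FS' : F (restr i @^-1` (restr i @` S)) by apply: filterS FS => f Sf; exists f.
have [_ [[f0 Sf0 <-] clF]] := cS _ (fmap_proper_filter (restr i) ultra_proper) FS'.
have Ff0 := ultra_cluster_cvg UF clF.
exists f0; split => //; apply: compact_open_cvg_tdist => K _ x _ e e0.
have e3 : 0 < e / 3 by rewrite divr_gt0.
have [N Nx Nf] := equicontinuous0_near SC eqS x e3.
have [d Nd] := dense_embedding_nbhs Nx.
exists (N, [set f | S f /\ tdist (f0 (i d)) (f (i d)) < e / 3]).
  by split => //; apply: filterI => //; exact: Ff0 _ (nbhs_eval_tball _ d e3).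
case=> x' f /= [Nx' [Sf f0f]] _.
have := Nf f0 Sf0 x (i d) (nbhs_singleton Nx) Nd; have := Nf f Sf (i d) x' Nd Nx'.
have := tdist_triangle (f0 x) (f0 (i d)) (f x').
have := tdist_triangle (f0 (i d)) (f (i d)) (f x'); lra.
Qed.

Lemma alpha_continuous : continuous (@alpha R A).
Proof.
move=> a; apply: compact_open_cvg_tdist => K cK chi Kchi e e0.
pose E := @set_val _ (chars R A) @` K.
have EC : E `<=` chars R A by move=> _ [psi _ <-]; exact: set_valP psi.
have val_cont : continuous (@set_val _ (chars R A) : dual R A -> cofun R A).
  exact: initial_continuous.
have cE : compact E by apply: continuous_compact => //; exact: continuous_subspaceT.
have eqE : equicontinuous0 E.
  apply: compact_restr_equicontinuous0 => //; apply: continuous_compact => //.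
  by apply: continuous_subspaceT; exact: restr_continuous.
have e2 : 0 < e / 2 by rewrite divr_gt0.
have [N Na Nf] := equicontinuous0_near EC eqE a e2.
exists ([set psi : dual R A | tdist (set_val chi a) (set_val psi a) < e / 2],
        @alpha R A @` N).
  split; first exact: val_cont chi _ (nbhs_eval_tball _ a e2).
  by apply: filterS Na => a' Na'; exists a'.
case=> psi _ /= [chipsi [a' Na' <-]] Kpsi; rewrite /alpha.
have := Nf _ (ex_intro2 _ _ psi Kpsi erefl) a a' (nbhs_singleton Na) Na'.
have := tdist_triangle (set_val chi a) (set_val psi a) (set_val psi a'); lra.
Qed.

End DualOfDense.

Lemma polar_extension (UD : set D) (O : set A) :
  open O -> (forall d, O (i d) -> UD d) ->
  forall psi, polar UD psi -> exists2 f : cofun R A, polar O f & restr i f = psi.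
Proof.
move=> oO OUD psi [psi_char psiUD]; have [f f_char fpsi] := restr_surj psi_char.
exists f => //; split => // _ [x Ox <-]; apply/Lambda1P.
apply: (dense_open_tnorm_le f_char.1 oO) => // d Od.
rewrite -[f (i d)]/(restr i f d) fpsi; apply/Lambda1P/psiUD.
by exists d => //; exact: OUD.
Qed.

Lemma prepolar_trace (U O : set A) (UD : set D) :
  open O -> (forall d, O (i d) -> UD d) ->
  U 0 -> (forall x y, U x -> U y -> O (x + y)) ->
  forall a d, prepolar (@polar R A U) a -> U (i d - a) -> prepolar (@polar R D UD) d.
Proof.
move=> oO OUD U0 UUO a d Ua Uda psi /(polar_extension oO OUD) [f [f_char fO] <-].
have UO x : U x -> O x by move=> Ux; rewrite -[x]addr0; exact: UUO.
have polar_f : polar U f.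
  by split => // _ [x Ux <-]; apply: fO; exists x => //; exact: UO.
have polar_f2 : polar U (fun x => f (x + x)).
  split; first exact: char_double.
  by move=> _ [x Ux <-]; apply: fO; exists (x + x) => //; exact: UUO.
have fa := char_tnorm_le8 f_char (Ua _ polar_f) (Ua _ polar_f2).
have fda : tnorm (f (i d - a)) <= 8^-1.
  apply: char_tnorm_le8 => //; apply: fO.
    by exists (i d - a) => //; exact: UO.
  by exists (i d - a + (i d - a)) => //; exact: UUO.
apply/Lambda1P; rewrite /restr -(subrKC a (i d)) f_char.2.
by apply: le_trans (tnorm_tadd _ _) _; lra.
Qed.

Lemma locally_quasi_convex_dense :
  locally_quasi_convex R D -> locally_quasi_convex R A.
Proof.
move=> [_ lqcD]; split => [U U0 | V V0].
  by apply: filterS U0; exact: sub_prepolar_polar.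
have [V1 V10 V1V] := nbhs0_add V0.
have V1D : nbhs (0 : D) (i @^-1` V1) by apply: i_cont; rewrite embedding0.
have [UD UD0 UDV1] := lqcD _ V1D.
have [W [oW W0 WUD]] := embedding_nbhs0 UD0.
have [U U0 UUW] := nbhs0_add (open_nbhs_nbhs (conj oW W0)).
exists U => // a Ua.
have /= [d [Uda V1ad]] :=
  dense_embedding_nbhs (filterI (nbhs0_shift a U0) (nbhs0_shift a (nbhs0_opp V10))).
have V1d : V1 (i d) := UDV1 _ (prepolar_trace oW WUD (nbhs_singleton U0) UUW Ua Uda).
rewrite opprB in V1ad; rewrite -(subrKC (i d) a); exact: V1V.
Qed.

End DenseSubgroup.

Local Close Scope quotient_scope.

Theorem mainTheorem5 (R : realType) (A D : topologicalZmodType) (i : D -> A)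
  (Hi : dense_subgroup_embedding i) :
  (* (a) restriction is a bijective continuous homomorphism \hat A -> \hat D *)
  [/\ (forall f : cofun R A, chars R A f -> chars R D (restr i f)),
      (forall f g : cofun R A, chars R A f -> chars R A g ->
         restr i (chadd f g) = chadd (restr i f) (restr i g)),
      (forall f g : cofun R A, chars R A f -> chars R A g ->
         restr i f = restr i g -> f = g),
      (forall g : cofun R D, chars R D g ->
         exists2 f : cofun R A, chars R A f & restr i f = g)
    & {within chars R A, continuous (@restr R D A i)}] /\
  (* (b) *)
  (continuous (@alpha R D) ->
     (forall S : set (cofun R A), S `<=` chars R A ->
        (compact S <-> compact (restr i @` S))) /\
     continuous (@alpha R A)) /\
  (* (c) *)
  (locally_quasi_convex R D -> locally_quasi_convex R A).
Proof.
have restr_cont : {within chars R A, continuous (@restr R D A i)}.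
  by apply: continuous_subspaceT; exact: restr_continuous Hi.
split; first by split => //; [exact: restr_char Hi | exact: restr_inj Hi | exact: restr_surj Hi].
split; last exact: locally_quasi_convex_dense Hi.
move=> alphaD_cont; split; last exact: alpha_continuous Hi alphaD_cont.

move=> S SC; split; last exact: (compact_of_restr Hi alphaD_cont SC).
by move=> cS; apply: continuous_compact cS; exact: continuous_subspaceW restr_cont.
Qed.
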